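(* Let $K$ be a field, $d\ge 2$, and $p\ge 1$ an integer. Let $h\in K[x_{i_1,\dots,i_d}\mid i_j\in[p]]$ be a polynomial that can be written as $$h = x_{p,\dots,p}\,h' + r',$$ where $h'$ is a polynomial in the variables $x_{i_1,\dots,i_d}$ with all $i_j\in[p-1]$ having weight $(1^{p-1},\dots,1^{p-1})$, and $r'$ is a polynomial of weight $(1^p,\dots,1^p)$ not involving the variable $x_{p,\dots,p}$. Let $n_1,\dots,n_d\ge p$ and $T\in K^{n_1}\otimes\cdots\otimes K^{n_d}$, and let $G=\prod_{i=1}^d\mathrm{Sym}([n_i])$. Suppose that $(\sigma h)(T)=0$ for all $\sigma\in G$, but $(\sigma h')(T)\neq 0$ for some $\sigma\in G$. Then $$\mathrm{prk}(T)\le d(p-1)+\sum_{s=1}^{\lfloor d/2\rfloor}\binom{d}{s}(p-1)^{d-s}.$$ *)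

From HB Require Import structures.
From mathcomp Require Import all_boot all_order all_algebra all_fingroup.
From mathcomp Require Import mpoly.
Set Implicit Arguments. Unset Strict Implicit. Unset Printing Implicit Defensive.
Import GRing.Theory.
Local Open Scope ring_scope.

(* Index set of the variables x_{i_1,...,i_d}, i_j in [p] (0-based: 'I_p). *)
Definition vidx (d p : nat) := {ffun 'I_d -> 'I_p}.

(* Polynomial ring K[x_{i_1..i_d} | i_j in [p]]; variable v is 'X_(enum_rank v). *)
Definition polyring (K : fieldType) (d p : nat) := {mpoly K[#|vidx d p|]}.

Definition var (K : fieldType) (d p : nat) (v : vidx d p) : polyring K d p :=
  'X_(enum_rank v).

(* The weight of a monomial m: for each direction j and index a, the number of
   variables (with multiplicity) whose j-th index is a. *)
Definition has_weight (K : fieldType) (d p : nat) (w : 'I_d -> 'I_p -> nat)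
  (q : polyring K d p) : Prop :=
  forall m, m \in msupp q ->
    forall (j : 'I_d) (a : 'I_p),
      (\sum_(v : vidx d p | v j == a) m (enum_rank v))%N = w j a.

Definition not_involving (K : fieldType) (d p : nat) (v : vidx d p)
  (q : polyring K d p) : Prop :=
  forall m, m \in msupp q -> m (enum_rank v) = 0%N.

Definition midx (d : nat) (n : 'I_d -> nat) := forall j : 'I_d, 'I_(n j).
Definition tensor (K : fieldType) (d : nat) (n : 'I_d -> nat) := midx n -> K.

Definition depends_only (K : fieldType) (d : nat) (n : 'I_d -> nat)
  (S : {set 'I_d}) (f : tensor K n) : Prop :=
  forall x y : midx n, (forall j, j \in S -> x j = y j) -> f x = f y.

(* T is a sum of r tensors of partition rank one, i.e. of the form
   a(x_S) b(x_{[d] \ S}) with S a nonempty proper subset of [d]. *)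
Definition prk_decomp (K : fieldType) (d : nat) (n : 'I_d -> nat)
  (T : tensor K n) (r : nat) : Prop :=
  exists (S : 'I_r -> {set 'I_d}) (a b : 'I_r -> tensor K n),
    (forall i, S i != set0 /\ S i != setT) /\
    (forall i, depends_only (S i) (a i)) /\
    (forall i, depends_only (~: S i) (b i)) /\
    (forall x, T x = \sum_(i < r) a i x * b i x).

Definition prk_le (K : fieldType) (d : nat) (n : 'I_d -> nat)
  (T : tensor K n) (r : nat) : Prop :=
  exists2 r', (r' <= r)%N & prk_decomp T r'.

(* (sigma h)(T), where sigma = (sigma_1,...,sigma_d) acts on variables by
   x_{i_1..i_d} |-> x_{sigma_1(i_1),...,sigma_d(i_d)}, the indices in [p]
   being viewed inside [n_j] (p <= n_j). *)
Definition act_eval (K : fieldType) (d p : nat) (n : 'I_d -> nat)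
  (hn : forall j, (p <= n j)%N) (sigma : forall j : 'I_d, {perm 'I_(n j)})
  (q : polyring K d p) (T : tensor K n) : K :=
  q.@[fun k => T (fun j => sigma j (widen_ord (hn j) ((enum_val k : vidx d p) j)))].

From HB Require Import structures.
From mathcomp Require Import all_boot all_order all_algebra all_fingroup.
From mathcomp Require Import mpoly.
From mathcomp Require Import zify.
From Stdlib Require Import FunctionalExtensionality.
Import GRing.Theory.

(* Write c := (sigma0 h')(T) <> 0 and pos_j a := sigma0_j(a) for a in [p].  A
   coordinate value y of direction j is "low" if y = pos_j b with b < p, and a
   multi-index x is "high" if none of its coordinates is low.
   - Low points: if the first low coordinate of x is x_j = pos_j b, then T(x) is
     the product of the indicator of x_j = pos_j b with a function of the other
     coordinates; these d(p-1) rank-one terms cover all non-high points.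
   - High points: evaluating the hypothesis at sigma0 followed by the
     transpositions (pos_j p, x_j) fixes c (h' only uses indices < p), turns
     x_{p..p} into T(x) and r' into r'(E_x), where E_x substitutes x_j for
     every coordinate with index p; hence T(x) = -c^{-1} r'(E_x).
   - Since r' has weight (1,...,1) and avoids x_{p..p}, the variables of each
     monomial with an index p have disjoint "agreement sets" covering [d], one
     of which has size <= d/2; grouping monomials by such a variable v writes
     r'(E_x) as a sum of products of a function of x on agree(v) and a
     function of x on its complement.
   - Counting the v with 1 <= |agree(v)| <= d/2 gives the second summand. *)

Set Implicit Arguments.
Unset Strict Implicit.
Unset Printing Implicit Defensive.

Lemma half_lt (d : nat) : 0 < d -> d./2 < d.
Proof. by rewrite -divn2 => d_gt0; have := divn_eq d 2; have := ltn_pmod d (isT : 0 < 2); lia. Qed.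

Lemma half_rest (a b d : nat) : a + b <= d -> d./2 < a -> b <= d./2.
Proof. by rewrite -divn2 => ? ?; have := divn_eq d 2; have := ltn_pmod d (isT : 0 < 2); lia. Qed.

Lemma sum_indicator_range (k D : nat) : \sum_(1 <= s < D) (k == s : nat) = (0 < k < D).
Proof.
elim: D => [|D IH]; first by rewrite big_geq // ltn0 andbF.
case: D IH => [|D] IH; first by rewrite big_geq //; case: (k) => [|[]].
rewrite big_nat_recr //= IH ltnS.
by case: (ltngtP k D.+1) => h; rewrite ?h; lia.
Qed.

Lemma sum1_witness (I : finType) (P : pred I) (f : I -> nat) :
  \sum_(u | P u) f u = 1 -> exists2 u, P u & f u != 0.
Proof.
move=> hs; case: (pickP [pred u | P u && (f u != 0)]) => [u /andP[]|h].
  by exists u.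
by move: hs; rewrite big1 // => u pu; move: (h u) => /=; rewrite pu /= => /negbFE/eqP.
Qed.

Lemma sum1_unique (I : finType) (P : pred I) (f : I -> nat) u1 u2 :
  \sum_(u | P u) f u = 1 -> P u1 -> P u2 -> f u1 != 0 -> f u2 != 0 -> u1 = u2.
Proof.
move=> hs p1 p2 f1 f2; apply/eqP/negPn/negP => ne.
move: hs; rewrite (bigD1 u1) //= (bigD1 u2) /=; last by rewrite p2 eq_sym.
lia.
Qed.

Section PartitionRank.
Variables (K : fieldType) (d : nat) (n : 'I_d -> nat).
Local Open Scope ring_scope.

Lemma prk_decomp_sum (T : tensor K n) (I : finType) (A : {pred I})
  (S : I -> {set 'I_d}) (a b : I -> tensor K n) :
  (forall i, i \in A -> S i != set0 /\ S i != setT) ->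
  (forall i, i \in A -> depends_only (S i) (a i)) ->
  (forall i, i \in A -> depends_only (~: S i) (b i)) ->
  (forall x, T x = \sum_(i in A) a i x * b i x) -> prk_decomp T #|A|.
Proof.
move=> hS ha hb hT.
exists (S \o enum_val), (a \o enum_val), (b \o enum_val).
split; first by move=> i; apply/hS/enum_valP.
split; first by move=> i; apply/ha/enum_valP.
split; first by move=> i; apply/hb/enum_valP.
by move=> x; rewrite hT (big_enum_val (fun i => a i x * b i x)).
Qed.

Lemma prk_decomp_add (T T1 T2 : tensor K n) r1 r2 :
  prk_decomp T1 r1 -> prk_decomp T2 r2 -> (forall x, T x = T1 x + T2 x) ->
  prk_decomp T (r1 + r2).
Proof.
move=> [S1 [a1 [b1 [hS1 [ha1 [hb1 hT1]]]]]] [S2 [a2 [b2 [hS2 [ha2 [hb2 hT2]]]]]] hT.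
pose glue X (f1 : 'I_r1 -> X) (f2 : 'I_r2 -> X) i :=
  match split i with inl i => f1 i | inr i => f2 i end.
exists (glue _ S1 S2), (glue _ a1 a2), (glue _ b1 b2).
split; first by move=> i; rewrite /glue; case: split.
split; first by move=> i; rewrite /glue; case: split.
split; first by move=> i; rewrite /glue; case: split.
move=> x; rewrite hT hT1 hT2 big_split_ord /=.
congr (_ + _); apply: eq_bigr => i _; rewrite /glue.
  by rewrite -[lshift _ _]/(unsplit (inl i)) unsplitK.
by rewrite -[rshift _ _]/(unsplit (inr i)) unsplitK.
Qed.

End PartitionRank.

Section Counting.
Variables (d p : nat) (u : vidx d p).

Definition agree (v : vidx d p) : {set 'I_d} := [set j | v j == u j].

Definition small (v : vidx d p) : bool := 0 < #|agree v| <= d./2.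

(* Prescribing the agreement set S leaves p-1 choices off S. *)
Lemma card_agree_eq (S : {set 'I_d}) :
  #|[pred v : vidx d p | agree v == S]| = p.-1 ^ (d - #|S|).
Proof.
pose F j : pred 'I_p := if j \in S then pred1 (u j) else predC1 (u j).
have -> : #|[pred v : vidx d p | agree v == S]| =
          #|(family F : simpl_pred {dffun forall j : 'I_d, 'I_p})|.
  apply: eq_card => v; rewrite [in LHS]inE /=.
  apply/eqP/familyP => [agreeS j|Fv].
    by rewrite /F -agreeS !inE; case: eqP => e; rewrite !inE; apply/eqP.
  apply/setP => j; rewrite inE; have := Fv j; rewrite /F.
  by case: (j \in S); rewrite inE; [move=> ->|move=> /negbTE].
rewrite card_family foldrE big_map big_enum /=.
rewrite (bigID (mem S)) /= big1 ?mul1n => [|j jS]; last by rewrite /F jS card1.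
rewrite (eq_bigr (fun _ => p.-1)) => [|j /negbTE jS]; last first.
  by rewrite /F jS cardC1 card_ord; case: (p).
rewrite prod_nat_const; congr (_ ^ _).
have -> : #|[pred j | j \notin S]| = #|~: S| by apply: eq_card => j; rewrite !inE.
have := cardsC S; rewrite card_ord => cardS.
by move: cardS; move: #|S| #|~: S| => s c; lia.
Qed.

Lemma card_agree_size (s : nat) :
  \sum_(v : vidx d p) (#|agree v| == s : nat) = 'C(d, s) * p.-1 ^ (d - s).
Proof.
rewrite -big_mkcond /=.
rewrite (partition_big agree (fun S : {set 'I_d} => #|S| == s)) /=; last by move=> v /eqP ->.
rewrite (eq_bigr (fun _ => p.-1 ^ (d - s))) => [|S /eqP cardS]; last first.
  rewrite -cardS -(card_agree_eq S) -[RHS]sum1_card; apply: eq_bigl => v.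
  by rewrite !inE andbC; case: eqP => // ->; rewrite eqxx.
rewrite sum_nat_const; congr (_ * _).
by rewrite -[in RHS](card_ord d) -card_draws; apply: eq_card => S; rewrite !inE.
Qed.

Lemma card_small :
  #|[pred v | small v]| = \sum_(1 <= s < d./2.+1) 'C(d, s) * p.-1 ^ (d - s).
Proof.
rewrite -sum1_card big_mkcond /=.
rewrite (eq_bigr (fun v => \sum_(1 <= s < d./2.+1) (#|agree v| == s : nat))) => [|v _].
  by rewrite exchange_big /=; apply: eq_bigr => s _; apply: card_agree_size.
by rewrite sum_indicator_range ltnS.
Qed.

End Counting.

Section Proposition.
Local Open Scope ring_scope.

Variables (K : fieldType) (d p : nat) (vlast : vidx d p) (h' r' : polyring K d p).
Variables (n : 'I_d -> nat) (hn : forall j, (p <= n j)%N) (T : tensor K n).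
Hypothesis hd : (2 <= d)%N.
Hypothesis hvlast : forall j, nat_of_ord (vlast j) = p.-1.
Hypothesis hw' : has_weight (fun _ a => nat_of_bool (a < p.-1)%N) h'.
Hypothesis hwr : has_weight (fun _ _ => 1%N) r'.
Hypothesis hr' : not_involving vlast r'.

Definition var_of (k : 'I_#|vidx d p|) : vidx d p := enum_val k.

Lemma h'_avoids_last m k : m \in msupp h' -> m k != 0%N -> forall j, var_of k j != vlast j.
Proof.
move=> hm mk j; apply/negP => /eqP kj.
have /eqP := hw' hm j (vlast j); rewrite hvlast ltnn sum_nat_eq0.
by move=> /forallP /(_ (var_of k)); rewrite kj eqxx /var_of enum_valK (negbTE mk).
Qed.

Lemma r'_weight m j : m \in msupp r' ->
  (\sum_(v : vidx d p | v j == vlast j) m (enum_rank v))%N = 1%N.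
Proof. by move=> hm; apply: hwr. Qed.

Lemma r'_agree_disjoint m (u1 u2 : vidx d p) : m \in msupp r' -> u1 != u2 ->
  m (enum_rank u1) != 0%N -> m (enum_rank u2) != 0%N ->
  [disjoint agree vlast u1 & agree vlast u2].
Proof.
move=> hm ne nz1 nz2; apply/pred0P => j /=; rewrite !inE.
apply/negP => /andP [e1 e2].
by move/eqP: ne; apply; apply: sum1_unique (r'_weight j hm) e1 e2 nz1 nz2.
Qed.

Lemma r'_exp1 m (u : vidx d p) j : m \in msupp r' -> m (enum_rank u) != 0%N ->
  j \in agree vlast u -> m (enum_rank u) = 1%N.
Proof. by move=> hm nz; rewrite inE => hj; have := r'_weight j hm; rewrite (bigD1 u) //=; lia. Qed.

(* Since r' does not involve x_{p,...,p}, the agreement sets of the variables of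
   a monomial of r' split [d] into at least two parts; one has size <= d/2. *)
Lemma r'_small_var m : m \in msupp r' ->
  exists u : vidx d p, (m (enum_rank u) != 0%N) && small vlast u.
Proof.
move=> hm; pose j0 : 'I_d := Ordinal (ltnW hd).
have [u u_j0 nz] := sum1_witness (r'_weight j0 hm).
have [j1 u_j1] : exists j1, u j1 != vlast j1.
  apply/existsP; apply: contraT => /existsPn u_last; move: nz.
  rewrite (_ : u = vlast) ?(hr' hm) //.
  by apply/ffunP => j; have /negPn/eqP := u_last j.
have [u' u'_j1 nz'] := sum1_witness (r'_weight j1 hm).
have ne : u != u' by apply: contraNneq u_j1 => ->.
have hcard : (#|agree vlast u| + #|agree vlast u'| <= d)%N.
  rewrite -cardsUI (disjoint_setI0 (r'_agree_disjoint hm ne nz nz')) cards0 addn0.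
  by rewrite -[X in (_ <= X)%N](card_ord d) max_card.
have pos_u : (0 < #|agree vlast u|)%N by apply/card_gt0P; exists j0; rewrite inE.
have pos_u' : (0 < #|agree vlast u'|)%N by apply/card_gt0P; exists j1; rewrite inE.
case: (leqP #|agree vlast u| d./2) => le_u.
  by exists u; rewrite nz /small pos_u le_u.
by exists u'; rewrite nz' /small pos_u' (half_rest hcard le_u).
Qed.

Definition small_var (m : 'X_{1..#|vidx d p|}) : vidx d p :=
  if [pick u | (m (enum_rank u) != 0%N) && small vlast u] is Some u then u else vlast.

Lemma small_varP m : m \in msupp r' ->
  (m (enum_rank (small_var m)) != 0%N) && small vlast (small_var m).
Proof.
move=> hm; rewrite /small_var; case: pickP => [u //|none].
by have [u hu] := r'_small_var hm; have := none u; rewrite hu.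
Qed.

Variable sigma0 : forall j : 'I_d, {perm 'I_(n j)}.

Definition pos (j : 'I_d) (a : 'I_p) : 'I_(n j) := sigma0 j (widen_ord (hn j) a).

Lemma pos_inj j : injective (pos j).
Proof. by move=> a b /perm_inj /(congr1 val) /= /val_inj. Qed.

(* The point at which sigma0 h' is evaluated, i.e. c := h'.@[base_env] = (sigma0 h')(T). *)
Definition base_env (k : 'I_#|vidx d p|) : K := T (fun j => pos j (var_of k j)).

Definition last_env (x : midx n) (k : 'I_#|vidx d p|) : K :=
  T (fun j => if var_of k j == vlast j then x j else pos j (var_of k j)).

Lemma h'_last_env x : h'.@[last_env x] = h'.@[base_env].
Proof.
rewrite !mevalE; apply: eq_big_seq => m hm; congr (_ * _).
apply: eq_bigr => k _; case: (eqVneq (m k) 0%N) => [->|mk]; first by rewrite !expr0.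
congr (_ ^+ _); congr (T _); apply: functional_extensionality_dep => j.
by rewrite (negbTE (h'_avoids_last hm mk j)).
Qed.

Definition low_index (b : 'I_p.-1) : 'I_p := widen_ord (leq_pred p) b.
Definition low (j : 'I_d) (y : 'I_(n j)) : bool := [exists b, y == pos j (low_index b)].
Definition high (x : midx n) : bool := [forall j, ~~ low (x j)].

Lemma low_index_onto j (a : 'I_p) : a != vlast j -> exists b, a = low_index b.
Proof.
move=> ne; have lt_a : (a < p.-1)%N.
  by have := ltn_ord a; move: ne; rewrite -(inj_eq val_inj) /= hvlast; lia.
by exists (Ordinal lt_a); apply: val_inj.
Qed.

Definition swap (x : midx n) (j : 'I_d) : {perm 'I_(n j)} :=
  (sigma0 j * tperm (pos j (vlast j)) (x j))%g.

Lemma swap_env x k : high x ->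
  T (fun j => swap x j (widen_ord (hn j) (var_of k j))) = last_env x k.
Proof.
move=> /forallP x_high; congr (T _); apply: functional_extensionality_dep => j.
rewrite permM -/(pos j (var_of k j)); case: eqP => [->|/eqP ne]; first by rewrite tpermL.
apply: tpermD; first by rewrite (inj_eq (@pos_inj j)) eq_sym.
have [b ->] := low_index_onto ne.
by apply: contraNneq (x_high j) => ->; apply/existsP; exists b.
Qed.

Hypothesis hvanish : forall sigma : (forall j : 'I_d, {perm 'I_(n j)}),
  act_eval hn sigma (var K vlast * h' + r') T = 0.

(* Evaluating the vanishing hypothesis at swap x: at a high point,
   c T(x) + r'(last_env x) = 0. *)
Lemma high_point_relation x : high x -> h'.@[base_env] * T x + r'.@[last_env x] = 0.
Proof.
move=> x_high; have := hvanish (swap x); rewrite /act_eval.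
rewrite (meval_eq _ (fun k => swap_env k x_high)) mevalD mevalM /var mevalXU h'_last_env.
suff -> : last_env x (enum_rank vlast) = T x by rewrite mulrC.
rewrite /last_env /var_of enum_rankK; congr (T _).
by apply: functional_extensionality_dep => j; rewrite eqxx.
Qed.

Definition var_part (v : vidx d p) (x : midx n) : K :=
  T (fun j => if v j == vlast j then x j else pos j (v j)).

Definition rest_part (v : vidx d p) (x : midx n) : K :=
  \sum_(m <- msupp r' | (m \in msupp r') && (v == small_var m))
     r'@_m * \prod_(k | k != enum_rank v) last_env x k ^+ m k.

Lemma r'_split x : r'.@[last_env x] = \sum_(v | small vlast v) var_part v x * rest_part v x.
Proof.
rewrite mevalE /rest_part; symmetry; under eq_bigr do rewrite big_distrr /=; symmetry.
rewrite -(exchange_big_dep (small vlast)) /=; last first.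
  by move=> m v hm /eqP ->; case/andP: (small_varP hm).
rewrite big_seq_cond; apply: eq_big => [m|m /andP [hm _]]; first by rewrite andbT.
rewrite (big_pred1_eq _ (small_var m)).
have /andP [nz sm] := small_varP hm.
have [j hj] : exists j, j \in agree vlast (small_var m) by apply/card_gt0P; case/andP: sm.
rewrite (bigD1 (enum_rank (small_var m))) //= (r'_exp1 hm nz hj) expr1.
by rewrite /last_env /var_of enum_rankK mulrCA.
Qed.

Lemma var_part_dep v : depends_only (agree vlast v) (var_part v).
Proof.
move=> x y xy; congr (T _); apply: functional_extensionality_dep => j.
by case: eqP => // /eqP hj; apply: xy; rewrite inE.
Qed.

Lemma rest_part_dep v : depends_only (~: agree vlast v) (rest_part v).
Proof.
move=> x y xy; apply: eq_bigr => m /andP [hm /eqP v_m]; congr (_ * _).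
apply: eq_bigr => k k_v; case: (eqVneq (m k) 0%N) => [->|mk]; first by rewrite !expr0.
congr (_ ^+ _); congr (T _); apply: functional_extensionality_dep => j.
case: eqP => // /eqP k_j; apply: xy; rewrite !inE; apply/negP => v_j.
have nz : m (enum_rank v) != 0%N by rewrite v_m; case/andP: (small_varP hm).
have ne : v != var_of k by apply: contraNneq k_v => ->; rewrite /var_of enum_valK.
have nz' : m (enum_rank (var_of k)) != 0%N by rewrite /var_of enum_valK.
have v_j' : j \in agree vlast v by rewrite inE.
by have := disjointFr (r'_agree_disjoint hm ne nz nz') v_j'; rewrite inE k_j.
Qed.

(* Terms covering the points with a low coordinate: if the first low coordinate
   of x is x_j = pos j b, then T x is the indicator of x_j = pos j b times the
   value of T with x_j frozen, restricted to points whose earlier coordinates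
   are not low. *)
Definition low_ind (jb : 'I_d * 'I_p.-1) (x : midx n) : K :=
  (x jb.1 == pos jb.1 (low_index jb.2))%:R.

Definition low_rest (jb : 'I_d * 'I_p.-1) (x : midx n) : K :=
  [forall k : 'I_d, (k < jb.1)%N ==> ~~ low (x k)]%:R *
  T (fun k => if k == jb.1 then pos k (low_index jb.2) else x k).

Lemma low_ind_dep jb : depends_only [set jb.1] (low_ind jb).
Proof. by move=> x y xy; rewrite /low_ind xy // inE. Qed.

Lemma low_rest_dep jb : depends_only (~: [set jb.1]) (low_rest jb).
Proof.
move=> x y xy; rewrite /low_rest; congr (_%:R * _).
  congr (nat_of_bool _); apply: eq_forallb => k; case: ltnP => //= lt_k.
  by rewrite xy // !inE; apply: contraTneq lt_k => ->; rewrite ltnn.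
congr (T _); apply: functional_extensionality_dep => k.
by case: eqP => // /eqP k_j; apply: xy; rewrite !inE.
Qed.

Lemma first_low x : ~~ high x ->
  exists j0 : 'I_d, low (x j0) /\ forall k : 'I_d, (k < j0)%N -> ~~ low (x k).
Proof.
move=> /forallPn [j /negPn lj].
have ex_low : exists i, [exists j : 'I_d, (val j == i) && low (x j)].
  by exists (val j); apply/existsP; exists j; rewrite eqxx.
case: (ex_minnP ex_low) => i /existsP [j0 /andP [/eqP j0_i lj0]] i_min.
exists j0; split => // k lt_k; apply/negP => lk.
have : (i <= k)%N by apply: i_min; apply/existsP; exists k; rewrite eqxx.
by rewrite -j0_i leqNgt lt_k.
Qed.

Lemma low_terms_high x : high x -> \sum_jb low_ind jb x * low_rest jb x = 0.
Proof.
move=> /forallP x_high; apply: big1 => -[j b] _; rewrite /low_ind /=.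
case: eqP => [x_j|]; last by rewrite mul0r.
by have /negP[] := x_high j; apply/existsP; exists b; rewrite x_j.
Qed.

Lemma low_terms_low x : ~~ high x -> \sum_jb low_ind jb x * low_rest jb x = T x.
Proof.
case/first_low => j0 [/existsP [b0 /eqP x_j0] j0_min].
rewrite (bigD1 (j0, b0)) //= big1 ?addr0 => [|[j b] /= ne]; last first.
  rewrite /low_ind /low_rest /=; case: (ltngtP j j0) => [lt_j|gt_j|/val_inj eq_j].
  - case: eqP => [x_j|]; last by rewrite mul0r.
    by have /negP[] := j0_min j lt_j; apply/existsP; exists b; rewrite x_j.
  - case: forallP => [all_k|_]; last by rewrite mul0r mulr0.
    by have := all_k j0; rewrite gt_j /= => /negP[]; apply/existsP; exists b0; rewrite x_j0.
  - subst j; case: eqP => [x_j0'|]; last by rewrite mul0r.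
    suff eq_b : b = b0 by move: ne; rewrite eq_b eqxx.
    by apply: val_inj; have /(congr1 val) := pos_inj (etrans (esym x_j0') x_j0).
rewrite /low_ind /low_rest /= x_j0 eqxx mul1r.
case: forallP => [_|]; last by case=> k; apply/implyP; apply: j0_min.
rewrite mul1r; congr (T _); apply: functional_extensionality_dep => k.
by case: eqP => // ->.
Qed.

(* Terms covering the high points: T x = -c^{-1} r'(last_env x), split along
   the small variables of r', each factor cut off outside the high points. *)
Definition high_on (S : {set 'I_d}) (x : midx n) : bool := [forall k in S, ~~ low (x k)].

Definition high_left (v : vidx d p) (x : midx n) : K :=
  (high_on (agree vlast v) x)%:R * (- h'.@[base_env]^-1) * var_part v x.

Definition high_right (v : vidx d p) (x : midx n) : K :=
  (high_on (~: agree vlast v) x)%:R * rest_part v x.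

Lemma high_on_dep (S : {set 'I_d}) (x y : midx n) : (forall j, j \in S -> x j = y j) -> high_on S x = high_on S y.
Proof. by move=> xy; apply: eq_forallb => k; case: (boolP (k \in S)) => //= kS; rewrite xy. Qed.

Lemma high_left_dep v : depends_only (agree vlast v) (high_left v).
Proof. by move=> x y xy; rewrite /high_left (var_part_dep xy) (high_on_dep xy). Qed.

Lemma high_right_dep v : depends_only (~: agree vlast v) (high_right v).
Proof. by move=> x y xy; rewrite /high_right (rest_part_dep xy) (high_on_dep xy). Qed.

Lemma high_terms_low x : ~~ high x ->
  \sum_(v | small vlast v) high_left v x * high_right v x = 0.
Proof.
case/first_low => j0 [lj0 _]; apply: big1 => v _; rewrite /high_left /high_right.
have low_off (S : {set 'I_d}) : j0 \in S -> high_on S x = false.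
  by move=> j0S; apply/negbTE/forallPn; exists j0; rewrite j0S lj0.
case: (boolP (j0 \in agree vlast v)) => j0v; first by rewrite low_off // !mul0r.
have j0_out : j0 \in ~: agree vlast v by rewrite in_setC.
by rewrite (low_off _ j0_out) mul0r mulr0.
Qed.

Hypothesis hc : h'.@[base_env] != 0.

Lemma high_terms_high x : high x ->
  \sum_(v | small vlast v) high_left v x * high_right v x = T x.
Proof.
move=> x_high; have on_all S : high_on S x.
  by apply/forallP => k; apply/implyP => _; move/forallP: x_high; apply.
have r'_val : r'.@[last_env x] = - (h'.@[base_env] * T x).
  by apply/eqP; rewrite -addr_eq0 addrC high_point_relation.
transitivity (- h'.@[base_env]^-1 * r'.@[last_env x]).
  rewrite r'_split big_distrr; apply: eq_bigr => v _.
  by rewrite /high_left /high_right !on_all !mul1r -mulrA.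
by rewrite r'_val mulrN mulNr opprK mulrA mulVf // mul1r.
Qed.

Lemma tensor_split x : T x =
  \sum_jb low_ind jb x * low_rest jb x +
  \sum_(v | small vlast v) high_left v x * high_right v x.
Proof.
case: (boolP (high x)) => x_high.
  by rewrite low_terms_high // add0r high_terms_high.
by rewrite low_terms_low // high_terms_low // addr0.
Qed.

Lemma singleton_proper (j : 'I_d) : [set j] != set0 /\ [set j] != setT.
Proof.
split; first by apply/set0Pn; exists j; rewrite inE.
apply/negP => /eqP jT; have := cardsT 'I_d; rewrite -jT cards1 card_ord.
by move=> d1; move: hd; rewrite -d1.
Qed.

Lemma small_agree_proper v : small vlast v -> agree vlast v != set0 /\ agree vlast v != setT.
Proof.
case/andP => pos_v le_v; split; apply/negP => /eqP def_v; move: pos_v le_v.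
  by rewrite def_v cards0.
rewrite def_v cardsT card_ord => d_gt0.
by rewrite leqNgt half_lt.
Qed.

Lemma prk_bound :
  prk_le T (d * p.-1 + \sum_(1 <= s < d./2.+1) 'C(d, s) * p.-1 ^ (d - s))%N.
Proof.
exists (#|{: 'I_d * 'I_p.-1}| + #|[pred v | small vlast v]|)%N.
  by rewrite card_prod !card_ord card_small.
apply: prk_decomp_add tensor_split.
  apply: (@prk_decomp_sum _ _ _ _ _ _ (fun jb => [set jb.1]) low_ind low_rest) => //.
  - by move=> jb _; apply: singleton_proper.
  - by move=> jb _; apply: low_ind_dep.
  - by move=> jb _; apply: low_rest_dep.
apply: (@prk_decomp_sum _ _ _ _ _ _ (agree vlast) high_left high_right) => //.
- by move=> v; rewrite inE => /small_agree_proper.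
- by move=> v _; apply: high_left_dep.
- by move=> v _; apply: high_right_dep.
Qed.

End Proposition.

Unset Implicit Arguments.
Set Strict Implicit.
Local Open Scope ring_scope.

Theorem proposition2 (K : fieldType) (d p : nat) (hd : (2 <= d)%N) (hp : (1 <= p)%N)
  (vlast : vidx d p) (hvlast : forall j, nat_of_ord (vlast j) = p.-1)
  (h h' r' : polyring K d p)
  (hdec : h = var K vlast * h' + r')
  (hw' : has_weight (fun _ a => nat_of_bool (a < p.-1)%N) h')
  (hwr : has_weight (fun _ _ => 1%N) r')
  (hr' : not_involving vlast r')
  (n : 'I_d -> nat) (hn : forall j, (p <= n j)%N) (T : tensor K n)
  (hzero : forall sigma : (forall j : 'I_d, {perm 'I_(n j)}), act_eval hn sigma h T = 0)
  (hnz : exists sigma : (forall j : 'I_d, {perm 'I_(n j)}), act_eval hn sigma h' T != 0) :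
  prk_le T (d * p.-1 + \sum_(1 <= s < d./2.+1) 'C(d, s) * p.-1 ^ (d - s))%N.
Proof.
subst h; case: hnz => sigma0 hc.
exact: (prk_bound hd hvlast hw' hwr hr' hzero hc).
Qed.
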